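(* Let $q$ be a prime power, $2\le k\le n$, and let $\mathcal{C}\subseteq\mathbb{F}_q^n$ be a linear code of dimension $k$ and minimum Hamming distance $d$. Then $$\mathbb{E}[\mathcal{C}] = n(H_n - H_{d-1}) - \sum_{s=k}^{n-d}\frac{\alpha(\mathcal{C},s)}{\binom{n-1}{s}}.$$
   Context: $H_m=\sum_{i=1}^m 1/i$, with $H_0=0$. $\mathbb{E}[\mathcal{C}]$ is $\mathbb{E}[G]$ for any generator matrix $G\in\mathbb{F}_q^{k\times n}$ of $\mathcal{C}$, the expected number of draws when columns of $G$ are drawn independently and uniformly at random from its $n$ columns (with repetition) until the drawn columns span $\mathbb{F}_q^k$. Writing $g_j$ for the $j$-th column of a generator matrix, $\alpha(\mathcal{C},s)=|\{S\subseteq\{1,\dots,n\}: |S|=s,\ \langle g_j:j\in S\rangle=\mathbb{F}_q^k\}|$, the number of information sets of $\mathcal{C}$ of size $s$. *)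

From HB Require Import structures.
From mathcomp Require Import all_boot all_order all_algebra all_field.
From mathcomp Require Import all_classical all_reals all_analysis.
Set Implicit Arguments. Unset Strict Implicit. Unset Printing Implicit Defensive.
Import Order.TTheory GRing.Theory Num.Theory.
Local Open Scope ring_scope.

Section Defs.
Variables (F : finFieldType) (k n : nat).

Definition hweight (c : 'rV[F]_n) : nat := #|[set j : 'I_n | c 0 j != 0]|.

Definition is_min_dist (G : 'M[F]_(k, n)) (d : nat) : Prop :=
  (exists u : 'rV[F]_k, u *m G != 0 /\ hweight (u *m G) = d) /\
  (forall u : 'rV[F]_k, u *m G != 0 -> (d <= hweight (u *m G))%N).

Definition cols_span (G : 'M[F]_(k, n)) (s : seq 'I_n) : bool :=
  row_full (\sum_(j <- s) <<(col j G)^T>>)%MS.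

Definition alpha (G : 'M[F]_(k, n)) (s : nat) : nat :=
  #|[set S : {set 'I_n} | (#|S| == s) && cols_span G (enum S)]|.

Definition nb_first_span (G : 'M[F]_(k, n)) (t : nat) : nat :=
  #|[set f : t.-tuple 'I_n |
      cols_span G f && ~~ cols_span G (take t.-1 f)]|.

End Defs.

(* P(T = t) where T is the number of uniform draws until spanning *)
Definition prob_first_span {R : realType} (F : finFieldType) (k n : nat)
  (G : 'M[F]_(k, n)) (t : nat) : R :=
  (nb_first_span G t)%:R / (n ^ t)%:R.

(* t * P(T = t); E[G] is the sum of the series of these terms *)
Definition exp_term {R : realType} (F : finFieldType) (k n : nat)
  (G : 'M[F]_(k, n)) (t : nat) : R :=
  t%:R * prob_first_span G t.

Definition harmH {R : realType} (m : nat) : R :=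
  \sum_(1 <= i < m.+1) (i%:R)^-1.

(* Let T be the number of draws. Summation by parts gives E[T] = sum_t P(T > t), and
   T > t means that the set S of columns drawn so far does not span F_q^k. For |S| < n,
   the expected number of times t at which the drawn set is exactly S is 1/C(n-1,|S|)
   (a first-step recursion on S), so E[T] is the sum of 1/C(n-1,|S|) over the
   non-spanning sets S. A nonzero codeword vanishes on a non-spanning S, hence
   |S| <= n - d; there are C(n,s) - alpha(C,s) non-spanning sets of size s, and
   sum_(s <= n-d) C(n,s)/C(n-1,s) = sum_(s <= n-d) n/(n-s) = n (H_n - H_(d-1)). *)

From HB Require Import structures.
From mathcomp Require Import all_boot all_order all_algebra all_field.
From mathcomp Require Import all_classical all_reals all_analysis.
From mathcomp Require Import zify ring lra.
(* Let the finset names shadow their homonyms from classical_sets. *)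
From mathcomp Require Import fintype finset.
Import Order.TTheory GRing.Theory Num.Theory numFieldNormedType.Exports.
Set Implicit Arguments. Unset Strict Implicit. Unset Printing Implicit Defensive.

Lemma card_set_sum_bool (T : finType) (P : pred T) :
  #|[set x | P x]| = \sum_x (P x : nat).
Proof. by rewrite -sum1dep_card big_mkcond; apply: eq_bigr => x _; case: (P x). Qed.

Section TupleCounting.
Variable T : finType.

Lemma sum_tuple_rcons t (f : t.+1.-tuple T -> nat) :
  \sum_(w : t.+1.-tuple T) f w = \sum_(x : T) \sum_(w : t.-tuple T) f [tuple of rcons w x].
Proof.
rewrite pair_big /=.
pose h (p : T * t.-tuple T) : t.+1.-tuple T := [tuple of rcons p.2 p.1].
have h_inj : injective h by move=> [x w] [y w'] /(congr1 val) /rcons_inj [/val_inj -> ->].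
have h_bij : bijective h.
  by apply: inj_card_bij h_inj _; rewrite card_prod !card_tuple expnS.
by apply: (reindex h); apply: onW_bij.
Qed.

Lemma card_tuple_in (A : {set T}) t :
  #|[set w : t.-tuple T | all [in A] w]| = (#|A| ^ t)%N.
Proof.
elim: t => [|t IHt].
  suff -> : [set w : 0.-tuple T | all [in A] w] = [set: 0.-tuple T]%SET.
    by rewrite cardsT card_tuple.
  by apply/setP => w; rewrite !inE tuple0.
rewrite card_set_sum_bool sum_tuple_rcons expnS -IHt -[#|A|]cardsE !card_set_sum_bool.
rewrite big_distrl /=; apply: eq_bigr => x _; rewrite big_distrr /=.
by apply: eq_bigr => w _; rewrite all_rcons mulnb.
Qed.

Definition nb_tuples_onto (S : {set T}) t :=
  #|[set w : t.-tuple T | [set x in w] == S]|.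

Lemma nb_tuples_onto0 S : nb_tuples_onto S 0 = (#|S| == 0)%N.
Proof.
rewrite /nb_tuples_onto card_set_sum_bool (big_pred1 [tuple]) => [|w]; last first.
  by apply/esym/eqP; exact: tuple0.
by rewrite cards_eq0 eq_sym.
Qed.

Lemma nb_tuples_onto_le S t : (nb_tuples_onto S t <= #|S| ^ t)%N.
Proof.
rewrite -card_tuple_in; apply/subset_leq_card/subsetP => w.
by rewrite !inE => /eqP <-; apply/allP => x; rewrite inE.
Qed.

Lemma setU1_eq_nat (x : T) (A S : {set T}) : x \in S ->
  ((x |: A == S) : nat) = ((A == S) + (A == S :\ x))%N.
Proof.
move=> xS; have [xA | xNA] := boolP (x \in A).
  have -> : x |: A = A by apply/setUidPr; rewrite sub1set.
  suff -> : (A == S :\ x) = false by rewrite addn0.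
  by apply: contraTF xA => /eqP ->; rewrite setD11.
have -> : (A == S) = false by apply: contraNF xNA => /eqP ->.
by congr nat_of_bool; apply/eqP/eqP => [<- | ->]; rewrite ?setU1K ?setD1K.
Qed.

(* Split on the last entry x: the other entries then cover S (if x \in S) or exactly S :\ x. *)
Lemma nb_tuples_ontoS S t : nb_tuples_onto S t.+1 =
  (#|S| * nb_tuples_onto S t + \sum_(x in S) nb_tuples_onto (S :\ x) t)%N.
Proof.
have set_rcons (w : t.-tuple T) x : [set y in rcons w x] = x |: [set y in w].
  by apply/setP => y; rewrite !inE mem_rcons inE.
rewrite /nb_tuples_onto card_set_sum_bool sum_tuple_rcons (bigID (mem S)) /=.
rewrite [X in (_ + X)%N]big1 ?addn0 => [|x xNS]; last first.
  by apply: big1 => w _; rewrite set_rcons; case: eqP => // ES; rewrite -ES setU11 in xNS.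
rewrite -sum_nat_const -big_split /=; apply: eq_bigr => x xS.
rewrite !card_set_sum_bool -big_split /=; apply: eq_bigr => w _.
by rewrite set_rcons setU1_eq_nat.
Qed.

End TupleCounting.

Local Open Scope ring_scope.

Lemma sum_set_by_card (V : nmodType) (T : finType) (P : pred {set T}) (g : nat -> V) m :
  (forall S, P S -> (#|S| < m)%N) ->
  \sum_(S | P S) g #|S| = \sum_(0 <= s < m) g s *+ #|[set S | P S & #|S| == s]|.
Proof.
move=> Pm; transitivity (\sum_(S | P S) \sum_(0 <= s < m) (if #|S| == s then g s else 0)).
  apply: eq_bigr => S /Pm Sm.
  rewrite (bigD1_seq #|S|) ?mem_index_iota ?iota_uniq //= eqxx big1 ?addr0 // => s.
  by rewrite eq_sym => /negbTE ->.
rewrite exchange_big /=; apply: eq_bigr => s _.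
by rewrite -big_mkcondr -sumr_const; apply: eq_bigl => S; rewrite inE.
Qed.

Lemma natr_bin_ratio (R : numFieldType) n s : (s < n)%N ->
  n%:R / (n - s)%:R = 'C(n, s)%:R / 'C(n.-1, s)%:R :> R.
Proof.
move=> sn; have nz m : (0 < m)%N -> m%:R != 0 :> R by move=> m_gt0; rewrite pnatr_eq0 -lt0n.
apply/eqP; rewrite eqr_div ?nz ?bin_gt0 ?subn_gt0 //; last lia.
by rewrite -!natrM mul_bin_down mulnC.
Qed.

Lemma binomial_inv_step (R : numFieldType) n m : (m.+1 < n)%N ->
  m.+1%:R * ('C(n.-1, m)%:R)^-1 / (n%:R - m.+1%:R) = ('C(n.-1, m.+1)%:R)^-1 :> R.
Proof.
move=> mn; have binR_neq0 i : (i <= n.-1)%N -> 'C(n.-1, i)%:R != 0 :> R.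
  by move=> le_in; rewrite pnatr_eq0 -lt0n bin_gt0.
have -> : n%:R - m.+1%:R = (n.-1 - m)%:R :> R.
  by rewrite -natrB ?(ltnW mn) //; congr _%:R; lia.
have -> : 'C(n.-1, m.+1)%:R = (n.-1 - m)%:R * 'C(n.-1, m)%:R / m.+1%:R :> R.
  by rewrite -natrM -mul_bin_left mulnC natrM mulfK ?pnatr_eq0.
by field; rewrite binR_neq0 ?nat1r ?pnatr_eq0 /=; lia.
Qed.

Lemma harmH_sub (R : realType) n d : (0 < d <= n)%N ->
  harmH n - harmH d.-1 = \sum_(0 <= s < (n - d).+1) ((n - s)%:R)^-1 :> R.
Proof.
case/andP => d_gt0 dn; rewrite /harmH prednK // (big_cat_nat _ (n := d)) //=; last lia.
rewrite addrC addrK big_nat_rev /= -{1}[d]add0n big_addn.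
have -> : (n.+1 - d = (n - d).+1)%N by lia.
by apply: eq_bigr => i _; congr (_^-1); congr (_%:R); lia.
Qed.

Section SeqSumsmx.
Variables (F : fieldType) (I : eqType) (m n : nat) (B_ : I -> 'M[F]_n).

Lemma sumsmx_seq_sup (s : seq I) (A : 'M[F]_(m, n)) j :
  j \in s -> (A <= B_ j)%MS -> (A <= \sum_(i <- s) B_ i)%MS.
Proof. by move=> js /submx_trans; apply; rewrite (big_rem j js) addsmxSl. Qed.

Lemma sumsmx_seq_subP (s : seq I) (A : 'M[F]_(m, n)) :
  (forall i, i \in s -> (B_ i <= A)%MS) -> (\sum_(i <- s) B_ i <= A)%MS.
Proof.
move=> sBA; rewrite big_seq; elim/big_rec: _ => [|i C si sCA]; first exact: sub0mx.
by rewrite addsmx_sub sBA.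
Qed.

End SeqSumsmx.

Lemma mxrank_sumsmx_rows (F : fieldType) (I : Type) n (s : seq I) (v_ : I -> 'rV[F]_n) :
  (\rank (\sum_(i <- s) <<v_ i>>)%MS <= size s)%N.
Proof.
elim: s => [|i s IHs]; first by rewrite big_nil mxrank0.
rewrite big_cons (leq_trans (mxrank_adds_leqif _ _)) //.
by rewrite genmxE; exact: (leq_add (rank_leq_row _) IHs).
Qed.

Section ColumnSpan.
Variables (F : finFieldType) (k n : nat) (G : 'M[F]_(k, n)).

Lemma cols_span_subset (s1 s2 : seq 'I_n) :
  {subset s1 <= s2} -> cols_span G s1 -> cols_span G s2.
Proof.
move=> s12; rewrite /cols_span -!col_leq_rank => /leq_trans; apply; apply: mxrankS.
by apply: sumsmx_seq_subP => j /s12 js2; exact: sumsmx_seq_sup js2 (submx_refl _).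
Qed.

Lemma eq_cols_span (s1 s2 : seq 'I_n) : s1 =i s2 -> cols_span G s1 = cols_span G s2.
Proof. by move=> s12; apply/idP/idP; apply: cols_span_subset => j; rewrite s12. Qed.

Lemma cols_span_size (s : seq 'I_n) : cols_span G s -> (k <= size s)%N.
Proof.
rewrite /cols_span -col_leq_rank => /leq_trans; apply.
exact: (mxrank_sumsmx_rows s (fun j => (col j G)^T)).
Qed.

(* A nonzero column of [cokermx M] is orthogonal to every column of G indexed by s. *)
Lemma not_cols_span_codeword (s : seq 'I_n) : row_free G -> ~~ cols_span G s ->
  exists2 u : 'rV[F]_k, u *m G != 0 & forall j, j \in s -> (u *m G) 0 j = 0.
Proof.
move=> freeG; rewrite /cols_span -cokermx_eq0.
set M := (\sum_(j <- s) _)%MS.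
case/matrix0Pn => i [l Cil]; exists (col l (cokermx M))^T.
  rewrite mulmx_free_eq0 //; apply: contraNneq Cil => /matrixP/(_ 0 i).
  by rewrite !mxE => ->.
move=> j js; have : ((col j G)^T <= M)%MS by apply: (sumsmx_seq_sup js); rewrite genmxE.
rewrite submxE => /eqP/matrixP/(_ 0 l); rewrite !mxE => /(etrans _); apply.
by apply: eq_bigr => i0 _; rewrite !mxE mulrC.
Qed.

End ColumnSpan.

Section LinearCode.
Variables (F : finFieldType) (k n d : nat) (G : 'M[F]_(k, n)).

Lemma cols_span_setE (s : seq 'I_n) : cols_span G s = cols_span G (enum [set j in s]).
Proof. by apply: eq_cols_span => j; rewrite mem_enum inE. Qed.

Lemma alpha_eq0 s : (s < k)%N -> alpha G s = 0%N.
Proof.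
move=> sk; apply/eqP; rewrite cards_eq0; apply/eqP/setP => S; rewrite !inE.
apply/negbTE; apply: contraTN sk => /andP[/eqP <- /cols_span_size].
by rewrite -cardE -leqNgt.
Qed.

Definition nb_not_spanning t := #|[set w : t.-tuple 'I_n | ~~ cols_span G w]|.

Lemma nb_first_spanS t :
  (nb_first_span G t.+1 + nb_not_spanning t.+1 = n * nb_not_spanning t)%N.
Proof.
rewrite /nb_first_span /nb_not_spanning !card_set_sum_bool !sum_tuple_rcons.
have -> : (n * \sum_(w : t.-tuple 'I_n) (~~ cols_span G w : nat) =
    \sum_(x : 'I_n) \sum_(w : t.-tuple 'I_n) (~~ cols_span G w : nat))%N.
  by rewrite sum_nat_const card_ord.
rewrite -big_split /=; apply: eq_bigr => x _.
rewrite -big_split /=; apply: eq_bigr => w _ /=.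
rewrite -cats1 take_size_cat ?size_tuple // cats1.
have : cols_span G w -> cols_span G (rcons w x).
  by apply: cols_span_subset => j jw; rewrite mem_rcons inE jw orbT.
by case: (cols_span G w); case: (cols_span G (rcons w x)) => // /(_ isT).
Qed.

Lemma nb_not_spanningE t :
  nb_not_spanning t = (\sum_(S : {set 'I_n} | ~~ cols_span G (enum S)) nb_tuples_onto S t)%N.
Proof.
rewrite /nb_not_spanning /nb_tuples_onto card_set_sum_bool.
under [RHS]eq_bigr do rewrite card_set_sum_bool.
rewrite exchange_big /=; apply: eq_bigr => w _.
rewrite big_mkcond (bigD1 [set j in w]) //= eqxx -cols_span_setE big1 ?addn0.
  by case: cols_span.
by move=> S /negbTE; rewrite eq_sym => ->; case: ifP.
Qed.

Lemma nb_not_spanning_le t : cols_span G (enum [set: 'I_n]) ->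
  (nb_not_spanning t <= n * n.-1 ^ t)%N.
Proof.
move=> spanT; rewrite /nb_not_spanning card_set_sum_bool.
apply: (@leq_trans (\sum_(w : t.-tuple 'I_n) \sum_(x : 'I_n) (all [in [set~ x]] w : nat))).
  apply: leq_sum => w _; case: (boolP (cols_span G w)) => //= notw.
  have [x xNw] : exists x, x \notin w.
    apply/existsP; rewrite -negb_forall; apply: contra notw => /forallP wT.
    by apply: cols_span_subset spanT => x _; exact: wT.
  have allx : all [in [set~ x]] w.
    by apply/allP => y yw; rewrite !inE; apply: contraNneq xNw => <-.
  by rewrite (bigD1 x) //= allx.
rewrite exchange_big /=; under eq_bigr do rewrite -card_set_sum_bool card_tuple_in cardsC1.
by rewrite sum_nat_const card_ord.
Qed.

Lemma card_not_spanning_sets s :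
  (#|[set S : {set 'I_n} | ~~ cols_span G (enum S) & #|S| == s]| + alpha G s)%N = 'C(n, s).
Proof.
rewrite -[n in RHS]card_ord -card_draws /alpha !card_set_sum_bool -big_split /=.
by apply: eq_bigr => S _; case: cols_span; case: (#|S| == s).
Qed.

Hypotheses (rankG : \rank G = k) (min_dist : is_min_dist G d).

Lemma min_dist_gt0 : (0 < d)%N.
Proof.
case: min_dist => [[u [/matrix0Pn[i [j uGij]] <-]] _].
by apply/card_gt0P; exists j; rewrite inE; move: uGij; rewrite [i]ord1.
Qed.

Lemma min_dist_le : (d <= n)%N.
Proof.
case: min_dist => [[u [_ <-]] _].
by apply: leq_trans (max_card _) _; rewrite card_ord.
Qed.

Lemma code_length_gt0 : (0 < n)%N.
Proof. exact: leq_trans min_dist_gt0 min_dist_le. Qed.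

Lemma card_not_cols_span (S : {set 'I_n}) :
  ~~ cols_span G (enum S) -> (#|S| <= n - d)%N.
Proof.
move=> notS; have [|u uG0 uGS] := not_cols_span_codeword _ notS; first by rewrite /row_free rankG.
have wt_le : (hweight (u *m G) <= #|~: S|)%N.
  apply/subset_leq_card/subsetP => j; rewrite !inE; apply: contra => jS.
  by apply/eqP/uGS; rewrite mem_enum.
have := min_dist.2 u uG0; have := cardsC S; rewrite card_ord; lia.
Qed.

Lemma cols_span_all : cols_span G (enum [set: 'I_n]).
Proof.
apply/negPn/negP => /card_not_cols_span; rewrite cardsT card_ord.
by have := min_dist_gt0; have := min_dist_le; lia.
Qed.

End LinearCode.

Local Open Scope classical_set_scope.

(* Summation by parts: E[T] = sum_t P(T > t). *)
Lemma series_nat_mul_tail (R : comPzRingType) (p A : nat -> R) N :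
  (forall t, p t.+1 = A t - A t.+1) ->
  series (fun t => t%:R * p t) N.+1 = series A N - N%:R * A N.
Proof.
move=> pA; elim: N => [|N IHN].
  by rewrite seriesSr /series /= !big_geq // !mul0r subr0 add0r.
by rewrite seriesSr IHN pA seriesSr -natr1; ring.
Qed.

Lemma cvg_series_nat_mul_tail (R : realType) (p A : nat -> R) (L : R) :
  (forall t, p t.+1 = A t - A t.+1) -> series A @ \oo --> L ->
  N%:R * A N @[N --> \oo] --> 0 -> series (fun t => t%:R * p t) @ \oo --> L.
Proof.
move=> pA cvgA cvg0; rewrite -cvg_shiftS.
rewrite (eq_cvg _ _ (fun N => series_nat_mul_tail N pA)) -[L]subr0.
exact: cvgB cvgA cvg0.
Qed.

Lemma nat_mul_expr_le (R : realFieldType) (w : R) N : 0 <= w < 1 ->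
  N%:R * w ^+ N <= (1 - w)^-1.
Proof.
case/andP => w_ge0 w_lt1; have w1_gt0 : 0 < 1 - w by rewrite subr_gt0.
have -> : N%:R * w ^+ N = \sum_(i < N) w ^+ N by rewrite sumr_const card_ord mulr_natl.
apply: (@le_trans _ _ (\sum_(i < N) w ^+ i)).
  by apply: ler_sum => i _; apply: ler_wiXn2l => //; [exact: ltW | exact: ltnW].
rewrite -(ler_pM2l w1_gt0) mulfV ?gt_eqF //.
have := subrXX 1 w N; rewrite expr1n; under eq_bigr do rewrite expr1n mul1r.
by move=> <-; rewrite lerBlDr lerDl exprn_ge0.
Qed.

Lemma cvg_nat_mul_expr (R : realType) (r : R) : 0 <= r < 1 ->
  (fun N => N%:R * r ^+ N) @ \oo --> 0.
Proof.
case/andP => r_ge0 r_lt1; set w := (1 + r) / 2.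
have w_ge0 : 0 <= w by rewrite /w; lra.
have w_lt1 : w < 1 by rewrite /w; lra.
have r_le : r <= w ^+ 2 by rewrite /w expr2; nra.
apply: (@squeeze_cvgr _ _ _ _ (cst 0) (fun N => (1 - w)^-1 * w ^+ N)); last 2 first.
- exact: cvg_cst.
- by rewrite -(mulr0 (1 - w)^-1); apply: cvgMl_tmp; apply: cvg_expr; rewrite ger0_norm.
apply: nearW => N /=; rewrite mulr_ge0 ?exprn_ge0 //=.
have rN_le : r ^+ N <= w ^+ N * w ^+ N.
  by rewrite -expr2 -exprM mulnC exprM lerXn2r ?nnegrE ?exprn_ge0.
apply: le_trans (ler_wpM2l (ler0n _ N) rN_le) _.
by rewrite mulrA ler_wpM2r ?exprn_ge0 ?nat_mul_expr_le ?w_ge0.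
Qed.

Section OntoProbability.
Variables (R : realType) (T : finType).
Implicit Types (S : {set T}).

Definition onto_prob S t : R := (nb_tuples_onto S t)%:R / (#|T| ^ t)%:R.

Lemma onto_prob_ge0 S t : 0 <= onto_prob S t.
Proof. by rewrite divr_ge0. Qed.

Lemma onto_probS S t : (0 < #|T|)%N -> onto_prob S t.+1 =
  #|S|%:R / #|T|%:R * onto_prob S t + #|T|%:R^-1 * \sum_(x in S) onto_prob (S :\ x) t.
Proof.
move=> T_gt0; have nT0 : #|T|%:R != 0 :> R by rewrite pnatr_eq0 -lt0n.
have nTt0 : (#|T| ^ t)%:R != 0 :> R by rewrite pnatr_eq0 -lt0n expn_gt0 T_gt0.
rewrite /onto_prob nb_tuples_ontoS natrD natrM natr_sum expnS natrM mulrDl.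
rewrite mulr_sumr mulr_suml; congr (_ + _); first by field; rewrite nT0 nTt0.
by apply: eq_bigr => x _; field; rewrite nT0 nTt0.
Qed.

Lemma series_onto_probS S N : (0 < #|T|)%N -> series (onto_prob S) N.+1 =
  onto_prob S 0 + #|S|%:R / #|T|%:R * series (onto_prob S) N
  + #|T|%:R^-1 * \sum_(x in S) series (onto_prob (S :\ x)) N.
Proof.
move=> T_gt0; rewrite /series /= big_nat_recl //.
under eq_bigr do rewrite onto_probS //.
rewrite big_split /= -!mulr_sumr addrA; congr (_ + _ + _ * _).
by rewrite exchange_big.
Qed.

Lemma is_cvg_series_onto_prob S : (#|S| < #|T|)%N -> cvgn (series (onto_prob S)).
Proof.
move=> ST; have T_gt0 : (0 < #|T|)%N by lia.
have r_ge0 : 0 <= #|S|%:R / #|T|%:R :> R by rewrite divr_ge0.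
apply: (@series_le_cvg _ _ (geometric 1 (#|S|%:R / #|T|%:R))) => [t|t|t|].
- exact: onto_prob_ge0.
- by rewrite geometric_ge0.
- rewrite /onto_prob /= mul1r expr_div_n -!natrX.
  by rewrite ler_pM2r ?invr_gt0 ?ltr0n ?expn_gt0 ?T_gt0 // ler_nat nb_tuples_onto_le.
apply: is_cvg_geometric_series; rewrite ger0_norm //.
by rewrite ltr_pdivrMr ?ltr0n // mul1r ltr_nat.
Qed.

Lemma cvg_series_onto_prob_rec S (L : R) : (#|S| < #|T|)%N ->
  (forall x, x \in S -> series (onto_prob (S :\ x)) @ \oo --> L) ->
  series (onto_prob S) @ \oo -->
    (onto_prob S 0 * #|T|%:R + #|S|%:R * L) / (#|T|%:R - #|S|%:R).
Proof.
move=> ST cvgL; have T_gt0 : (0 < #|T|)%N by lia.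
have nT0 : #|T|%:R != 0 :> R by rewrite pnatr_eq0 -lt0n.
have nTS0 : #|T|%:R - #|S|%:R != 0 :> R by rewrite subr_eq0 eqr_nat neq_ltn ST orbT.
have /cvg_ex[l cvg_l] := is_cvg_series_onto_prob ST.
set a := onto_prob S 0; set s := #|S|%:R; set N := #|T|%:R.
have cvg_shift : a + s / N * series (onto_prob S) t
    + N^-1 * \sum_(x in S) series (onto_prob (S :\ x)) t @[t --> \oo] --> l.
  by rewrite -(eq_cvg _ _ (fun t => series_onto_probS S t T_gt0)) cvg_shiftS.
have cvg_rhs : a + s / N * series (onto_prob S) t
    + N^-1 * \sum_(x in S) series (onto_prob (S :\ x)) t @[t --> \oo] -->
  a + s / N * l + N^-1 * \sum_(x in S) L.
  apply: cvgD; first by apply: cvgD; [exact: cvg_cst | exact: cvgMl_tmp].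
  apply: cvgMl_tmp; apply: cvg_big => //; exact: add_continuous.
have : l = a + s / N * l + N^-1 * \sum_(x in S) L by exact: cvg_unique cvg_shift cvg_rhs.
rewrite sumr_const -mulr_natl -/s => l_fix.
have -> : (a * N + s * L) / (N - s) = l.
  apply: (mulIf nTS0); rewrite mulfVK // mulrBr {1}l_fix; field; exact: nT0.
exact: cvg_l.
Qed.

Lemma cvg_series_onto_prob S : (#|S| < #|T|)%N ->
  series (onto_prob S) @ \oo --> (('C(#|T|.-1, #|S|)%:R)^-1 : R).
Proof.
have [m] := ubnP #|S|; elim: m S => // m IHm S Sm ST.
set c : R := ('C(#|T|.-1, #|S|.-1)%:R)^-1.
suff -> : ('C(#|T|.-1, #|S|)%:R)^-1 =
    (onto_prob S 0 * #|T|%:R + #|S|%:R * c) / (#|T|%:R - #|S|%:R).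
  apply: cvg_series_onto_prob_rec => // x xS.
  have cardS : #|S| = #|S :\ x|.+1 by rewrite (cardsD1 x) xS.
  by rewrite /c cardS /=; apply: IHm; lia.
rewrite /onto_prob nb_tuples_onto0 expn0 divr1 /c.
case: #|S| ST => [ST | s sT] /=.
  by rewrite bin0 mul0r addr0 subr0 mul1r invr1 divff // pnatr_eq0 -lt0n.
by rewrite mul0r add0r binomial_inv_step.
Qed.

End OntoProbability.

Section ExpectedDraws.
Variables (R : realType) (F : finFieldType) (k n d : nat) (G : 'M[F]_(k, n)).

Definition prob_first_span_gt t : R := (nb_not_spanning G t)%:R / (n ^ t)%:R.

Lemma prob_first_spanS t : (0 < n)%N ->
  prob_first_span G t.+1 = prob_first_span_gt t - prob_first_span_gt t.+1.
Proof.
move=> n_gt0; rewrite /prob_first_span /prob_first_span_gt.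
have -> : (nb_first_span G t.+1)%:R =
    (n * nb_not_spanning G t)%:R - (nb_not_spanning G t.+1)%:R :> R.
  by rewrite -(nb_first_spanS G t) natrD addrK.
rewrite expnS !natrM; field.
by rewrite !pnatr_eq0 -!lt0n n_gt0 expn_gt0 n_gt0.
Qed.

Hypotheses (rankG : \rank G = k) (min_dist : is_min_dist G d).

Lemma cvg_series_prob_first_span_gt : series prob_first_span_gt @ \oo -->
  (\sum_(S : {set 'I_n} | ~~ cols_span G (enum S)) ('C(n.-1, #|S|)%:R)^-1 : R).
Proof.
have -> : series prob_first_span_gt =
    (fun N => \sum_(S : {set 'I_n} | ~~ cols_span G (enum S)) series (@onto_prob R _ S) N).
  apply/funext => N; rewrite /series /= exchange_big /=; apply: eq_bigr => t _.
  by rewrite /prob_first_span_gt /onto_prob card_ord nb_not_spanningE natr_sum mulr_suml.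
apply: cvg_big => [|S notS]; first exact: add_continuous.
rewrite -[n in 'C(n.-1, _)]card_ord; apply: cvg_series_onto_prob.
have := card_not_cols_span rankG min_dist notS; have := min_dist_gt0 min_dist.
by have := code_length_gt0 min_dist; rewrite card_ord; lia.
Qed.

(* A non-spanning draw misses some column, so P(T > N) <= n ((n - 1) / n)^N. *)
Lemma cvg_nat_mul_prob_first_span_gt :
  (fun N => N%:R * prob_first_span_gt N) @ \oo --> (0 : R).
Proof.
have n_gt0 := code_length_gt0 min_dist.
set r : R := n.-1%:R / n%:R.
have n_gt0R : 0 < n%:R :> R by rewrite ltr0n.
have r01 : 0 <= r < 1 by rewrite divr_ge0 //= ltr_pdivrMr // mul1r ltr_nat; lia.
apply: (@squeeze_cvgr _ _ _ _ (cst 0) (fun N => n%:R * (N%:R * r ^+ N))); last 2 first.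
- exact: cvg_cst.
- by rewrite -(mulr0 n%:R); apply: cvgMl_tmp; exact: cvg_nat_mul_expr.
apply: nearW => N /=; rewrite mulr_ge0 ?divr_ge0 //= [leRHS]mulrCA ler_wpM2l //.
rewrite /prob_first_span_gt /r expr_div_n mulrA natrX ler_pM2r ?invr_gt0 ?exprn_gt0 //.
by rewrite -natrX -natrM ler_nat nb_not_spanning_le // (cols_span_all rankG min_dist).
Qed.

Lemma sum_not_spanning_inv_binomial :
  \sum_(S : {set 'I_n} | ~~ cols_span G (enum S)) ('C(n.-1, #|S|)%:R)^-1 =
  n%:R * (harmH n - harmH d.-1)
  - \sum_(k <= s < (n - d).+1) (alpha G s)%:R / ('C(n.-1, s))%:R :> R.
Proof.
have d_gt0 := min_dist_gt0 min_dist; have d_le := min_dist_le min_dist.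
rewrite (@sum_set_by_card _ _ _ (fun s => ('C(n.-1, s)%:R)^-1) (n - d).+1); last first.
  by move=> S /(card_not_cols_span rankG min_dist); lia.
have card_R s : #|[set S : {set 'I_n} | ~~ cols_span G (enum S) & #|S| == s]|%:R =
    'C(n, s)%:R - (alpha G s)%:R :> R.
  by rewrite -(card_not_spanning_sets G s) natrD addrK.
under eq_bigr => s _ do rewrite -[_ *+ #|_|]mulr_natr card_R mulrBr.
rewrite sumrB; congr (_ - _).
  rewrite harmH_sub ?d_gt0 // mulr_sumr; apply: eq_big_nat => s /andP[_ sm].
  by rewrite mulrC natr_bin_ratio //; lia.
under eq_bigr do rewrite mulrC.
case: (leqP k (n - d).+1) => km.
  rewrite (big_cat_nat _ (n := k)) //= big_nat_cond big1 ?add0r // => s /andP[/andP[_ sk] _].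
  by rewrite alpha_eq0 // mul0r.
rewrite [RHS]big_geq ?(ltnW km) // big_nat_cond big1 // => s /andP[/andP[_ sm] _].
by rewrite alpha_eq0 ?mul0r //; lia.
Qed.

End ExpectedDraws.

Unset Implicit Arguments.

Theorem mainTheorem7 (R : realType) (F : finFieldType) (k n d : nat)
  (G : 'M[F]_(k, n)) :
  (2 <= k)%N -> (k <= n)%N -> \rank G = k -> is_min_dist G d ->
  series (@exp_term R F k n G) @ \oo -->
    (n%:R * (harmH n - harmH d.-1)
     - \sum_(k <= s < (n - d).+1) (alpha G s)%:R / ('C(n.-1, s))%:R : R).
Proof.
move=> _ _ rankG min_dist; rewrite -sum_not_spanning_inv_binomial //.
have prob_first_span_tail t := prob_first_spanS R G t (code_length_gt0 min_dist).
apply: (cvg_series_nat_mul_tail prob_first_span_tail).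
  exact: cvg_series_prob_first_span_gt rankG min_dist.
exact: cvg_nat_mul_prob_first_span_gt rankG min_dist.
Qed.
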